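(* For all positive integers $n,m$, the zero-error (Las Vegas) randomized query complexity of $f_{n,m}$ satisfies $R_0(f_{n,m})=\tilde O(n+m)$.
   Context: Let $n,m$ be positive integers, $M=[n]\times[m]$ (a grid of cells with $n$ rows and $m$ columns), $\tilde M = M\cup\{\bot\}$ (pointers to cells, $\bot$ is the null pointer) and $\tilde C=[m]\cup\{\bot\}$ (pointers to columns). Let $T$ be the following fixed binary tree with $m$ leaves and $m-1$ internal nodes: if $m=2^k$, $T$ is the complete binary tree with $2^k$ leaves; if $2^k<m<2^{k+1}$, take the complete binary tree with $2^k$ leaves and add a pair of children to each of its $m-2^k$ leftmost leaves. The two outgoing arcs of each internal node are labeled 'left' and 'right', and the leaves are labeled $1,\dots,m$ from left to right. For a leaf $j$, $T(j)$ denotes the sequence of 'left'/'right' labels on the path from the root to leaf $j$. The input alphabet is $\Sigma=\{0,1\}\times\tilde M\times\tilde M\times\tilde C$; for $v\in\Sigma$ its four components are called $\mathrm{val}(v)$, $\mathrm{lpoint}(v)$, $\mathrm{rpoint}(v)$, $\mathrm{bpoint}(v)$. The function $f_{n,m}\colon\Sigma^M\to\{0,1\}$ is defined by $f_{n,m}(x)=1$ iff: (1) there is exactly one column $b\in[m]$ with $\mathrm{val}(x_{i,b})=1$ for all $i\in[n]$ (the marked column); (2) in column $b$ there is a unique cell $a$ with $x_a\ne(1,\bot,\bot,\bot)$ (the special element); (3) for each column $j\in[m]\setminus\{b\}$, the path starting at $a$ and following the pointers $\mathrm{lpoint},\mathrm{rpoint}$ as specified by the sequence $T(j)$ exists (no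 pointer on it is $\bot$) and ends in a cell $\ell_j$ lying in column $j$ with $\mathrm{val}(x_{\ell_j})=0$; (4) $\mathrm{bpoint}(x_{\ell_j})=b$ for every $j\in[m]\setminus\{b\}$. A query asks for the value $x_c\in\Sigma$ of one cell $c\in M$. A randomized decision tree is a probability distribution over deterministic decision trees; $R_0(f)$ is the minimum, over randomized decision trees all of whose deterministic trees in the support compute $f$ exactly, of the maximum over inputs $x$ of the expected number of queries on $x$. $\tilde O(\cdot)$ hides factors polylogarithmic in $n$ and $m$. *)

From HB Require Import structures.
From mathcomp Require Import all_boot all_order all_algebra.
From mathcomp Require Import all_classical all_reals.
Set Implicit Arguments. Unset Strict Implicit. Unset Printing Implicit Defensive.
Import Order.TTheory GRing.Theory Num.Theory.
Local Open Scope ring_scope.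

Inductive btree := BLeaf | BNode of btree & btree.

Fixpoint complete_tree (k : nat) : btree :=
  if k is k'.+1 then BNode (complete_tree k') (complete_tree k') else BLeaf.

(* add a pair of children to each of the r leftmost leaves;
   returns the new tree and the number of leaves still to be expanded *)
Fixpoint grow (r : nat) (t : btree) : btree * nat :=
  match t with
  | BLeaf => if r is S r' then (BNode BLeaf BLeaf, r') else (BLeaf, 0)
  | BNode l rt =>
      let (l', r1) := grow r l in
      let (rt', r2) := grow r1 rt in (BNode l' rt', r2)
  end.

(* root-to-leaf paths, leaves listed from left to right;
   false = 'left', true = 'right' *)
Fixpoint leaf_paths (t : btree) : seq (seq bool) :=
  match t with
  | BLeaf => [:: [::]]
  | BNode l r => map (cons false) (leaf_paths l) ++ map (cons true) (leaf_paths r)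
  end.

Definition Ttree (m : nat) : btree :=
  let k := trunc_log 2 m in (grow (m - 2 ^ k) (complete_tree k)).1.

(* T(j) for the leaf labelled j+1, j : 'I_m (columns are 0-indexed here) *)
Definition Tpath (m : nat) (j : 'I_m) : seq bool := nth [::] (leaf_paths (Ttree m)) j.

Definition cell (n m : nat) := ('I_n * 'I_m)%type.
(* Sigma = {0,1} x ~M x ~M x ~C, with None playing the role of bottom *)
Definition Sigma (n m : nat) :=
  (bool * option (cell n m) * option (cell n m) * option 'I_m)%type.

Definition val_of {n m} (v : Sigma n m) : bool := v.1.1.1.
Definition lpoint {n m} (v : Sigma n m) : option (cell n m) := v.1.1.2.
Definition rpoint {n m} (v : Sigma n m) : option (cell n m) := v.1.2.
Definition bpoint {n m} (v : Sigma n m) : option 'I_m := v.2.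

Definition blank (n m : nat) : Sigma n m := (true, None, None, None).

Fixpoint follow {n m} (x : cell n m -> Sigma n m) (a : cell n m) (s : seq bool)
  : option (cell n m) :=
  match s with
  | [::] => Some a
  | d :: s' =>
      match (if d then rpoint (x a) else lpoint (x a)) with
      | Some c => follow x c s'
      | None => None
      end
  end.

Definition marked_col {n m} (x : cell n m -> Sigma n m) (b : 'I_m) : bool :=
  [forall i : 'I_n, val_of (x (i, b))].

Definition f_nm (n m : nat) (x : cell n m -> Sigma n m) : bool :=
  [exists b : 'I_m,
    [&& marked_col x b,
        [forall b' : 'I_m, marked_col x b' ==> (b' == b)] &
        [exists i : 'I_n,
          [&& x (i, b) != blank n m,
              [forall i' : 'I_n, (i' != i) ==> (x (i', b) == blank n m)] &
              [forall j : 'I_m, (j != b) ==>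
                 match follow x (i, b) (Tpath j) with
                 | Some l => [&& l.2 == j, ~~ val_of (x l) & bpoint (x l) == Some b]
                 | None => false
                 end]]]]].

Inductive dtree (I A : Type) :=
  | DOut of bool
  | DQuery of I & (A -> dtree I A).
Arguments DOut {I A}.
Arguments DQuery {I A}.

Fixpoint run {I A} (t : dtree I A) (x : I -> A) : bool * nat :=
  match t with
  | DOut b => (b, 0)
  | DQuery i k => let r := run (k (x i)) x in (r.1, S r.2)
  end.

Definition computes {I A} (t : dtree I A) (f : (I -> A) -> bool) : Prop :=
  forall x, (run t x).1 = f x.

(* a randomized decision tree: a (finitely supported) probability
   distribution over deterministic decision trees *)
Definition rdtree (R : realType) (I A : Type) := seq (R * dtree I A).

Definition is_distr {R : realType} {I A} (D : rdtree R I A) : Prop :=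
  (forall p, p \in map fst D -> 0 <= p) /\ \sum_(p <- D) p.1 = 1.

Definition zero_error {R : realType} {I A} (D : rdtree R I A) (f : (I -> A) -> bool) : Prop :=
  is_distr D /\ forall i : nat, (i < size D)%N ->
    let pt := nth (0, DOut false) D i in 0 < pt.1 -> computes pt.2 f.

Definition exp_queries {R : realType} {I A} (D : rdtree R I A) (x : I -> A) : R :=
  \sum_(pt <- D) pt.1 * ((run pt.2 x).2)%:R.

From HB Require Import structures.
From mathcomp Require Import all_boot all_order all_algebra.
From mathcomp Require Import all_classical all_reals.
From mathcomp Require Import zify ring lra.
Import Order.TTheory GRing.Theory Num.Theory.
Set Implicit Arguments. Unset Strict Implicit. Unset Printing Implicit Defensive.

(* The algorithm keeps a list A of candidates for the marked column.  In the
   first candidate j it probes L(|A|) = ceil(2n/|A|) ceil(log |A|) random rows.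
   A zero rules j out.  Otherwise it reads the whole column j: if it has no zero,
   j is the only possible marked column and the pointer structure is checked
   with O(n + m log m) queries; if it has z zeros, only the columns named by
   their bpoints can be marked, so at most z candidates survive.  When 2z < |A|
   the column read is paid for by the candidates dropped at once; when
   2z >= |A| all L(|A|) probes miss the zeros with probability at most 1/|A|,
   so the read costs n/|A| in expectation.  Hence the expected number of
   queries from a candidates is at most O(n + m log m) + sum_{k <= a}
   (L(k) + 3n/k) = O((n + m) log^2 (n + m)). *)

Inductive qprog (I A X : Type) := QRet of X | QAsk of I & (A -> qprog I A X).
Arguments QRet {I A X}. Arguments QAsk {I A X}.

Section QueryPrograms.
Variables (I : eqType) (A : Type).
Implicit Types (x : I -> A) (l : seq I).

Fixpoint qbind X Y (q : qprog I A X) (f : X -> qprog I A Y) : qprog I A Y :=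
  match q with QRet v => f v | QAsk i k => QAsk i (fun a => qbind (k a) f) end.

Fixpoint qrun X (q : qprog I A X) x : X * nat :=
  match q with
  | QRet v => (v, 0%N)
  | QAsk i k => let r := qrun (k (x i)) x in (r.1, r.2.+1)
  end.

Fixpoint qtree (q : qprog I A bool) : dtree I A :=
  match q with QRet b => DOut b | QAsk i k => DQuery i (fun a => qtree (k a)) end.

Lemma run_qtree q x : run (qtree q) x = qrun q x.
Proof. by elim: q => [b|i k IH] //=; rewrite IH. Qed.

Lemma qrun_bind_out X Y (q : qprog I A X) (f : X -> qprog I A Y) x :
  (qrun (qbind q f) x).1 = (qrun (f (qrun q x).1) x).1.
Proof. by elim: q => //= i k IH. Qed.

Lemma qrun_bind_cost X Y (q : qprog I A X) (f : X -> qprog I A Y) x :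
  (qrun (qbind q f) x).2 = ((qrun q x).2 + (qrun (f (qrun q x).1) x).2)%N.
Proof. by elim: q => //= i k IH; rewrite IH. Qed.

Fixpoint ask_all l : qprog I A (seq A) :=
  if l is i :: l' then QAsk i (fun a => qbind (ask_all l') (fun vs => QRet (a :: vs)))
  else QRet [::].

Lemma ask_all_out l x : (qrun (ask_all l) x).1 = map x l.
Proof. by elim: l => //= i l IH; rewrite qrun_bind_out IH. Qed.

Lemma ask_all_cost l x : (qrun (ask_all l) x).2 = size l.
Proof. by elim: l => //= i l IH; rewrite qrun_bind_cost IH addn0. Qed.

Fixpoint ask_find (p : pred A) l : qprog I A (option I) :=
  if l is i :: l' then QAsk i (fun a => if p a then QRet (Some i) else ask_find p l')
  else QRet None.

Lemma ask_find_cost p l x : ((qrun (ask_find p l) x).2 <= size l)%N.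
Proof. by elim: l => //= i l IH; case: (p (x i)). Qed.

Lemma ask_find_none p l x : isSome (qrun (ask_find p l) x).1 = has (p \o x) l.
Proof. by elim: l => //= i l IH; case: (p (x i)). Qed.

Lemma ask_find_some p l x c :
  (qrun (ask_find p l) x).1 = Some c -> c \in l /\ p (x c).
Proof.
elim: l => //= i l IH; case: ifP => [pxi [<-]|_ /IH[lc pxc]]; first by rewrite mem_head.
by rewrite in_cons lc orbT.
Qed.

Fixpoint qall T (l : seq T) (g : T -> qprog I A bool) : qprog I A bool :=
  if l is t :: l' then qbind (g t) (fun b => qbind (qall l' g) (fun b' => QRet (b && b')))
  else QRet true.

Lemma qall_out T (l : seq T) g x : (qrun (qall l g) x).1 = all (fun t => (qrun (g t) x).1) l.
Proof. by elim: l => //= t l IH; rewrite !qrun_bind_out /= IH. Qed.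

Lemma qall_cost T (l : seq T) g x :
  (qrun (qall l g) x).2 = (\sum_(t <- l) (qrun (g t) x).2)%N.
Proof.
elim: l => [|t l IH]; first by rewrite big_nil.
by rewrite big_cons /= !qrun_bind_cost /= IH addn0.
Qed.

End QueryPrograms.
Arguments ask_all {I A} l.

Fixpoint all_seqs T (l : seq T) (k : nat) : seq (seq T) :=
  if k is k'.+1 then [seq t :: s | t <- l, s <- all_seqs l k'] else [:: [::]].

Lemma size_all_seqs T (l : seq T) k : size (all_seqs l k) = (size l ^ k)%N.
Proof. by elim: k => //= k IH; rewrite size_allpairs IH expnS. Qed.

Lemma sum_all_seqs_prefix T (l : seq T) (p : pred T) k L : (L <= k)%N ->
  (\sum_(s <- all_seqs l k) all p (take L s))%N = (count p l ^ L * size l ^ (k - L))%N.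
Proof.
elim: k L => [|k IH] [|L] //= HL.
- by rewrite big_cons big_nil.
- by rewrite subn0 -size_all_seqs -sum1_size mul1n; apply: eq_bigr => s _; rewrite take0.
rewrite big_allpairs_dep /= subSS expnS -mulnA -IH // -sum1_count big_distrl [RHS]big_mkcond /=.
by apply: eq_bigr => t _; case: (p t); rewrite ?mul1n // big1.
Qed.

Lemma expn_bernoulli u z c : (u ^ c.+1 + c.+1 * z * u ^ c <= (u + z) ^ c.+1)%N.
Proof.
elim: c => [|c IH]; first by rewrite !expn1 expn0 mul1n muln1.
rewrite [((u + z) ^ c.+2)%N]expnS 2![(u ^ _.+1)%N]expnS.
move: IH; rewrite expnS; set P := (u ^ c)%N; set Q := ((u + z) ^ c.+1)%N => IH.
by have := leq_mul (leqnn (u + z)) IH; nia.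
Qed.

Lemma double_expn_le u z c : (0 < c)%N -> (u <= c * z)%N -> (2 * u ^ c <= (u + z) ^ c)%N.
Proof.
case: c => // c _ Huz; apply: leq_trans (expn_bernoulli u z c).
by rewrite [(u ^ c.+1)%N]expnS; have := leq_mul Huz (leqnn (u ^ c)); nia.
Qed.

(* The number of rows probed in a candidate when [a] candidates remain; it is at
   least ceil(2n/a) ceil(log2 a). *)
Definition sample_len n a := ((2 * n %/ a).+1 * up_log 2 a)%N.

(* c := 2n/a + 1 > n/z draws miss z given rows with probability (1 - z/n)^c <= 1/2,
   and [up_log 2 a] such batches miss them with probability at most 1/a. *)
Lemma sample_miss_le n a z : (0 < a)%N -> (a <= 2 * z)%N -> (z <= n)%N ->
  (a * (n - z) ^ sample_len n a <= n ^ sample_len n a)%N.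
Proof.
move=> a_gt0 a_le2z z_le_n; rewrite /sample_len !expnM.
set c := (2 * n %/ a).+1; set k := up_log 2 a.
have ca_gt : (2 * n < c * a)%N by apply: ltn_ceil.
have half : (2 * (n - z) ^ c <= n ^ c)%N.
  by rewrite -{2}(subnK z_le_n); apply: double_expn_le => //; nia.
apply: (@leq_trans (2 ^ k * ((n - z) ^ c) ^ k)%N).
  by rewrite leq_mul2r up_logP ?orbT.
by rewrite -expnMn; case: k => // k; rewrite leq_exp2r.
Qed.

Fixpoint height (t : btree) : nat :=
  if t is BNode l r then (maxn (height l) (height r)).+1 else 0%N.

Lemma size_leaf_paths t p : p \in leaf_paths t -> (size p <= height t)%N.
Proof.
elim: t p => [|l IHl r IHr] p /=; first by rewrite inE => /eqP ->.
rewrite mem_cat => /orP[] /mapP[q q_in ->] /=; rewrite ltnS.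
  by rewrite (leq_trans (IHl _ q_in)) ?leq_maxl.
by rewrite (leq_trans (IHr _ q_in)) ?leq_maxr.
Qed.

Lemma height_complete_tree k : height (complete_tree k) = k.
Proof. by elim: k => //= k ->; rewrite maxnn. Qed.

Lemma height_grow r t : (height (grow r t).1 <= (height t).+1)%N.
Proof.
elim: t r => [|l IHl rt IHr] r /=; first by case: r.
have := IHl r; case: (grow r l) => [l' r1] /= Hl.
have := IHr r1; case: (grow r1 rt) => [rt' r2] /= Hr.
by rewrite ltnS geq_max (leq_trans Hl) ?(leq_trans Hr) // ltnS ?leq_maxl ?leq_maxr.
Qed.

Lemma size_Tpath m (j : 'I_m) : (size (Tpath j) <= (trunc_log 2 m).+1)%N.
Proof.
rewrite /Tpath; have [j_lt|j_ge] := ltnP j (size (leaf_paths (Ttree m))); last first.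
  by rewrite nth_default.
apply: leq_trans (size_leaf_paths (mem_nth _ j_lt)) _.
by apply: leq_trans (height_grow _ _) _; rewrite height_complete_tree.
Qed.

Section Harmonic.
Variable R : numFieldType.
Local Open Scope ring_scope.

Lemma harmonic_pow2_le t : \sum_(1 <= k < (2 ^ t).+1) (k%:R : R)^-1 <= t.+1%:R.
Proof.
elim: t => [|t IH]; first by rewrite expn0 big_nat1 invr1.
rewrite (big_cat_nat (n := (2 ^ t).+1)) //; last by rewrite ltnS leq_pexp2l.
rewrite -[t.+2]addn1 natrD; apply: lerD IH _.
apply: (@le_trans _ _ (\sum_((2 ^ t).+1 <= k < (2 ^ t.+1).+1) ((2 ^ t)%:R : R)^-1)).
  apply: ler_sum_nat => k /andP[k_gt _].
  by rewrite lef_pV2 ?posrE ?ltr0n ?expn_gt0 ?ler_nat ?(ltnW k_gt) //; lia.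
rewrite sumr_const_nat subSS expnS mul2n -addnn addnK -[(_^-1 *+ _)]mulr_natr mulVf //.
by rewrite pnatr_eq0 expn_eq0.
Qed.

Lemma harmonic_le_up_log m : \sum_(1 <= k < m.+1) (k%:R : R)^-1 <= (up_log 2 m).+1%:R.
Proof.
apply: le_trans (harmonic_pow2_le (up_log 2 m)).
rewrite (big_nat_widen _ _ (2 ^ up_log 2 m).+1) ?ltnS ?up_logP // big_mkcond /=.
by apply: ler_sum_nat => k _; case: ifP => // _; rewrite invr_ge0 ler0n.
Qed.

End Harmonic.

Lemma exists_unique_pickE (T : finType) (E Q : pred T) :
  [exists i, [&& ~~ E i, [forall i', (i' != i) ==> E i'] & Q i]] =
  if [pick i | ~~ E i] is Some i then [forall i', (i' != i) ==> E i'] && Q i else false.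
Proof.
case: pickP => [i Ei | noE]; last first.
  by apply/existsP => -[i /and3P[Ei _ _]]; rewrite noE in Ei.
apply/existsP/andP => [[i' /and3P[Ei' Eothers Qi']] | [Eothers Qi]]; last first.
  by exists i; rewrite Ei Eothers.
suff -> : i = i' by rewrite Eothers Qi'.
by apply: contraTeq Ei => ne; rewrite negbK; move/forallP/(_ i): Eothers; rewrite ne.
Qed.

Section Algorithm.
Variables n m : nat.
Local Notation cell := (cell n m).
Local Notation Sig := (Sigma n m).
Local Notation blank := (blank n m).
Implicit Types (x : cell -> Sig) (b j : 'I_m) (a : cell) (vs : seq Sig).

Definition col_cells j : seq cell := [seq (i, j) | i <- enum 'I_n].

Lemma nth_map_col_cells x j (i : 'I_n) : nth blank (map x (col_cells j)) i = x (i, j).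
Proof. by rewrite -map_comp (nth_map i) ?size_enum_ord // nth_ord_enum. Qed.

Lemma marked_colE x j : marked_col x j = all val_of (map x (col_cells j)).
Proof.
rewrite -map_comp all_map; apply/forallP/allP => [ok i _ | ok i]; first exact: ok.
by apply: ok; rewrite mem_enum.
Qed.

Definition leaf_ok x b j (l : option cell) :=
  if l is Some c then [&& c.2 == j, ~~ val_of (x c) & bpoint (x c) == Some b] else false.

Definition special_ok x b :=
  [exists i : 'I_n, [&& x (i, b) != blank,
     [forall i' : 'I_n, (i' != i) ==> (x (i', b) == blank)] &
     [forall j : 'I_m, (j != b) ==> leaf_ok x b j (follow x (i, b) (Tpath j))]]].

Definition good_col x b :=
  [&& marked_col x b, [forall b', marked_col x b' ==> (b' == b)] & special_ok x b].

Lemma f_nmE x : f_nm x = [exists b, good_col x b].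
Proof. by []. Qed.

Lemma f_nm_marked x b : marked_col x b -> f_nm x = special_ok x b.
Proof.
move=> marked_b; rewrite f_nmE; apply/existsP/idP => [[b' /and3P[_ only_b' ok]] | ok].
  by move/forallP/(_ b): only_b'; rewrite marked_b => /eqP ->.
exists b; rewrite /good_col marked_b ok andbT; apply/forallP => b'.
apply/implyP => marked_b'; apply: contraT => ne.
case/existsP: ok => i /and3P[_ _ /forallP/(_ b')]; rewrite ne /=.
case: (follow _ _ _) => [[i1 j1]|] //= /and3P[/eqP /= j1_eq zero_c _].
by move/forallP/(_ i1): marked_b'; rewrite -j1_eq (negbTE zero_c).
Qed.

Fixpoint ask_follow a (s : seq bool) : qprog cell Sig (option cell) :=
  if s is d :: s' then
    QAsk a (fun v => if (if d then rpoint v else lpoint v) is Some c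
                     then ask_follow c s' else QRet None)
  else QRet (Some a).

Lemma ask_follow_out x a s : (qrun (ask_follow a s) x).1 = follow x a s.
Proof. by elim: s a => //= d s IH a; case: (if d then _ else _). Qed.

Lemma ask_follow_cost x a s : ((qrun (ask_follow a s) x).2 <= size s)%N.
Proof. by elim: s a => //= d s IH a; case: (if d then _ else _). Qed.

Definition leafQ b a j : qprog cell Sig bool :=
  qbind (ask_follow a (Tpath j)) (fun l =>
    if l is Some c
    then QAsk c (fun v => QRet [&& c.2 == j, ~~ val_of v & bpoint v == Some b])
    else QRet false).

Lemma leafQ_out x b a j : (qrun (leafQ b a j) x).1 = leaf_ok x b j (follow x a (Tpath j)).
Proof. by rewrite qrun_bind_out ask_follow_out; case: (follow _ _ _). Qed.

Lemma leafQ_cost x b a j : ((qrun (leafQ b a j) x).2 <= (size (Tpath j)).+1)%N.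
Proof.
rewrite qrun_bind_cost; have := ask_follow_cost x a (Tpath j).
by case: (qrun _ x).1 => [c|] /=; rewrite ?addn1 ?addn0 // => /leqW.
Qed.

Definition verify_col b (col : 'I_n -> Sig) : qprog cell Sig bool :=
  if [pick i | col i != blank] is Some i then
    if [forall i', (i' != i) ==> (col i' == blank)]
    then qall (enum 'I_m) (fun j => if j == b then QRet true else leafQ b (i, b) j)
    else QRet false
  else QRet false.

Definition verifyQ b : qprog cell Sig bool :=
  qbind (ask_all (col_cells b)) (fun vs => verify_col b (fun i => nth blank vs i)).

Lemma verifyQ_out x b : (qrun (verifyQ b) x).1 = special_ok x b.
Proof.
rewrite qrun_bind_out ask_all_out.
have -> : (fun i : 'I_n => nth blank (map x (col_cells b)) i) = fun i => x (i, b).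
  by apply: funext => i; apply: nth_map_col_cells.
rewrite /verify_col /special_ok exists_unique_pickE.
case: pickP => // i _; case: ifP => //= _; rewrite qall_out.
apply/allP/forallP => [ok j | ok j _].
  by apply/implyP => ne; move: (ok j (mem_enum _ j)); rewrite (negbTE ne) leafQ_out.
by case: eqVneq => [//|ne]; rewrite leafQ_out; apply: (implyP (ok j)).
Qed.

Definition verify_cost := (n + m * (trunc_log 2 m).+2)%N.

Lemma verifyQ_cost x b : ((qrun (verifyQ b) x).2 <= verify_cost)%N.
Proof.
rewrite /verify_cost qrun_bind_cost ask_all_cost size_map size_enum_ord leq_add2l /verify_col.
case: pickP => [i _|_] //; case: ifP => // _; rewrite qall_cost.
apply: (@leq_trans (\sum_(j <- enum 'I_m) (trunc_log 2 m).+2)%N).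
  apply: leq_sum => j _; case: ifP => // _.
  by apply: leq_trans (leafQ_cost _ _ _ _) _; rewrite ltnS size_Tpath.
by rewrite big_const_seq count_predT size_enum_ord iter_addn_0 mulnC.
Qed.

Definition is_zero (v : Sig) := ~~ val_of v.

Definition points_to vs b := has (fun v => is_zero v && (bpoint v == Some b)) vs.

(* [A] lists the candidates for the marked column still alive.  Each round
   consumes one seed, whose first [sample_len n (size A)] rows are probed in the
   first candidate; the fuel [k] only has to be at least [size A]. *)
Fixpoint searchQ (k : nat) (A : seq 'I_m) (seeds : seq (seq 'I_n)) : qprog cell Sig bool :=
  match k, A with
  | k'.+1, j :: A' =>
    qbind (ask_find is_zero [seq (i, j) | i <- take (sample_len n (size A)) (head [::] seeds)])
      (fun r => if r is Some _ then searchQ k' A' (behead seeds)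
        else qbind (ask_all (col_cells j)) (fun vs =>
          if all val_of vs then verifyQ j
          else searchQ k' [seq b <- A' | points_to vs b] (behead seeds)))
  | _, _ => QRet false
  end.

Lemma good_col_zero x i j : is_zero (x (i, j)) -> ~~ good_col x j.
Proof.
move=> zero_ij; apply/and3P => -[/forallP/(_ i) val_ij _ _].
by rewrite /is_zero val_ij in zero_ij.
Qed.

Lemma good_col_points_to x j b :
  b != j -> ~~ points_to (map x (col_cells j)) b -> ~~ good_col x b.
Proof.
move=> ne_bj; apply: contra => /and3P[_ _ /existsP[i /and3P[_ _ /forallP/(_ j)]]].
rewrite eq_sym ne_bj /=; case: (follow _ _ _) => [[i1 j1]|] //= /and3P[/eqP /= <- zero_c bp].
apply/hasP; exists (x (i1, j1)); first by apply: map_f; apply: map_f; rewrite mem_enum.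
by rewrite /is_zero zero_c bp.
Qed.

Lemma f_nm_none x : (forall b, ~~ good_col x b) -> f_nm x = false.
Proof. by move=> bad; rewrite f_nmE; apply/negbTE/existsP => -[b]; apply/negP. Qed.

Lemma searchQ_correct x k A seeds : (size A <= k)%N ->
  (forall b, b \notin A -> ~~ good_col x b) -> (qrun (searchQ k A seeds) x).1 = f_nm x.
Proof.
elim: k A seeds => [|k IH] [|j A] seeds //= sizeA outside_bad;
  try by rewrite f_nm_none // => b; apply: outside_bad.
have outside_j b : b \notin A -> b != j -> ~~ good_col x b.
  by move=> b_notin ne_bj; apply: outside_bad; rewrite in_cons negb_or ne_bj.
rewrite qrun_bind_out; case found: (qrun (ask_find _ _) x).1 => [c|] /=.
  have [/mapP[i _ ->] zero_c] := ask_find_some found.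
  apply: IH => // b b_notin; have [-> | ne_bj] := eqVneq b j; last exact: outside_j.
  exact: good_col_zero zero_c.
rewrite qrun_bind_out ask_all_out; case: ifP => [marked | unmarked].
  by rewrite verifyQ_out (@f_nm_marked x j) // marked_colE.
apply: IH => [|b]; first by rewrite size_filter (leq_trans (count_size _ _)).
rewrite mem_filter negb_and => b_out; have [-> | ne_bj] := eqVneq b j.
  by rewrite /good_col marked_colE unmarked.
case/orP: b_out => [not_pointed | b_notin]; first exact: good_col_points_to ne_bj not_pointed.
exact: outside_j b_notin ne_bj.
Qed.

Lemma size_points_to_le vs (A : seq 'I_m) :
  uniq A -> (size [seq b <- A | points_to vs b] <= count is_zero vs)%N.
Proof.
pose target v := if is_zero v then bpoint v else None.
move=> uniqA; apply: (@leq_trans (size (undup (pmap target vs)))).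
  apply: uniq_leq_size; first exact: filter_uniq.
  move=> b; rewrite mem_filter => /andP[/hasP[v v_in /andP[zero_v /eqP bp]] _].
  by rewrite mem_undup mem_pmap; apply/mapP; exists v; rewrite // /target zero_v bp.
rewrite (leq_trans (size_undup _)) // size_pmap; apply: sub_count => v.
by rewrite /target; case: (is_zero v).
Qed.

Lemma count_zero_col x j :
  count is_zero (map x (col_cells j)) = count (fun i => is_zero (x (i, j))) (enum 'I_n).
Proof. by rewrite -map_comp count_map. Qed.

End Algorithm.

Local Open Scope ring_scope.

Lemma sumr_const_seq (V : nmodType) T (l : seq T) (c : V) : \sum_(t <- l) c = c *+ size l.
Proof. by rewrite big_const_seq count_predT iter_addr_0. Qed.

Section Budget.
Variables (R : realFieldType) (n m : nat).
Local Notation verify_cost := (verify_cost n m).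

Definition round_cost k : R := (sample_len n k)%:R + 3 * n%:R / k%:R.

(* Our bound on the expected number of queries made by [searchQ] from [a]
   candidates: a column read and a verification, plus [round_cost k] for k <= a. *)
Definition budget a : R := (n + verify_cost)%:R + \sum_(1 <= k < a.+1) round_cost k.

Lemma round_cost_ge0 k : 0 <= round_cost k.
Proof. by rewrite addr_ge0 ?divr_ge0 ?mulr_ge0. Qed.

Lemma round_cost_ge k a : (0 < k <= a)%N -> 3 * n%:R / a%:R <= round_cost k.
Proof.
case/andP=> k_gt0 k_le; rewrite -[X in X <= _]add0r lerD // ler_wpM2l ?mulr_ge0 //.
by rewrite lef_pV2 ?posrE ?ltr0n ?ler_nat // (leq_trans k_gt0).
Qed.

Lemma budget_split z a : (z <= a)%N ->
  budget a = budget z + \sum_(z.+1 <= k < a.+1) round_cost k.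
Proof. by move=> le_za; rewrite /budget (big_cat_nat (n := z.+1)) // addrA. Qed.

Lemma budgetS a : budget a.+1 = budget a + round_cost a.+1.
Proof. by rewrite (budget_split (leqnSn a)) big_nat1. Qed.

Lemma budget_base a : (n + verify_cost)%:R <= budget a.
Proof. by rewrite lerDl sumr_ge0 // => k _; apply: round_cost_ge0. Qed.

Lemma budget_ge0 a : 0 <= budget a.
Proof. exact: le_trans (budget_base a). Qed.

Lemma verify_cost_le_budget a : verify_cost%:R <= budget a.
Proof. by apply: le_trans (budget_base a); rewrite ler_nat leq_addl. Qed.

Lemma budget_mono : {homo budget : a b / (a <= b)%N >-> a <= b}.
Proof.
apply: homo_leq (@lexx _ _) (@le_trans _ _) _ => a.
by rewrite budgetS lerDl round_cost_ge0.
Qed.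

Lemma budget_rich a : (0 < a)%N -> (sample_len n a)%:R + budget a.-1 + n%:R / a%:R <= budget a.
Proof.
case: a => // a _; rewrite budgetS /round_cost /=.
have : n%:R / a.+1%:R <= 3 * n%:R / a.+1%:R :> R.
  by rewrite ler_wpM2r ?invr_ge0 // ler_peMl ?ler0n // (ler_nat R 1 3).
by set c := 3 * _ / _; set c1 := n%:R / _ => ?; lra.
Qed.

(* When fewer than half of the [a] candidates can survive, the [a - z] dropped
   rounds pay for reading a whole column. *)
Lemma budget_poor z a : (2 * z < a)%N -> (sample_len n a)%:R + n%:R + budget z <= budget a.
Proof.
move=> few; have z_lt : (z < a)%N by lia.
rewrite (budget_split (ltnW z_lt)) big_nat_recr //=.
pose c : R := 3 * n%:R / a%:R.
have tail : c *+ (a - z.+1) <= \sum_(z.+1 <= k < a) round_cost k.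
  by rewrite -sumr_const_nat; apply: ler_sum_nat => k /andP[? ?]; apply: round_cost_ge; lia.
have enough : n%:R <= c *+ (a - z.+1) + c.
  rewrite -mulrSr subnSK // -[c *+ _]mulr_natr /c mulrAC ler_pdivlMr ?ltr0n; last by lia.
  by rewrite -!natrM ler_nat; nia.
by move: tail enough; rewrite /round_cost -/c => ? ?; lra.
Qed.

End Budget.

Section ExpectedCost.
Variables (R : realFieldType) (n m : nat).
Local Notation budget := (budget R n m).

Definition seed_len := ((2 * n).+1 * up_log 2 m)%N.
Definition seed_space := all_seqs (enum 'I_n) seed_len.

Lemma sample_len_le a : (a <= m)%N -> (sample_len n a <= seed_len)%N.
Proof. by move=> le_am; rewrite leq_mul ?leq_up_log // ltnS leq_div. Qed.

Lemma miss_count_le (hit : pred 'I_n) a :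
  (0 < a <= m)%N -> (a <= 2 * count hit (enum 'I_n))%N ->
  (a * \sum_(s <- seed_space) all (predC hit) (take (sample_len n a) s) <= size seed_space)%N.
Proof.
case/andP=> a_gt0 a_le_m many; have L_le := sample_len_le a_le_m.
rewrite sum_all_seqs_prefix // size_all_seqs size_enum_ord mulnA.
rewrite -{2}(subnKC L_le) expnD leq_mul2r; apply/orP; right.
have := count_predC hit (enum 'I_n); rewrite size_enum_ord => count_n.
have -> : count (predC hit) (enum 'I_n) = (n - count hit (enum 'I_n))%N by lia.
by apply: sample_miss_le => //; lia.
Qed.

(* One round from [a] candidates: the probed rows either hit a zero, leaving
   [a - 1] candidates, or the column is read and [rest] more queries are
   expected afterwards. *)
Lemma round_budget (hit : pred 'I_n) a (rest : R) :
  (0 < a <= m)%N -> rest <= budget (count hit (enum 'I_n)) -> rest <= budget a.-1 ->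
  \sum_(s <- seed_space) ((sample_len n a)%:R +
     (if has hit (take (sample_len n a) s) then budget a.-1 else n%:R + rest))
  <= budget a *+ size seed_space.
Proof.
move=> a_range rest_z rest_a; have a_gt0 : (0 < a)%N by case/andP: a_range.
set L := sample_len n a; set z := count hit (enum 'I_n).
have rich := budget_rich R n m a_gt0; rewrite -/L in rich.
have [few | many] := ltnP (2 * z) a.
  rewrite -sumr_const_seq; apply: ler_sum => s _; case: ifP => _.
    have : 0 <= n%:R / a%:R :> R by rewrite divr_ge0.
    by move: rich; set c := n%:R / _ => ? ?; lra.
  by have := budget_poor R n m few; rewrite -/L => ?; lra.
apply: (@le_trans _ _ (\sum_(s <- seed_space)
    ((L%:R + budget a.-1) + n%:R * (all (predC hit) (take L s) : nat)%:R))).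
  apply: ler_sum => s _; rewrite all_predC; case: ifP => _ /=; first by rewrite mulr0 addr0.
  by rewrite mulr1; lra.
rewrite big_split /= sumr_const_seq -mulr_sumr -natr_sum.
have miss := miss_count_le a_range many; set M := (\sum_(s <- _) _)%N in miss *.
have miss_cost : n%:R * M%:R <= n%:R / a%:R *+ size seed_space :> R.
  rewrite -[_ *+ size seed_space]mulr_natr mulrAC ler_pdivlMr ?ltr0n // -!natrM ler_nat.
  by rewrite -mulnA leq_mul2l [(M * a)%N]mulnC miss orbT.
apply: le_trans (ler_wMn2r (size seed_space) rich).
by rewrite [X in _ <= X]mulrnDl lerD2l.
Qed.

Lemma uniq_size_ord (A : seq 'I_m) : uniq A -> (size A <= m)%N.
Proof. by move=> /card_uniqP <-; rewrite -[m in (_ <= m)%N]card_ord max_card. Qed.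

Lemma searchQ_cost x k (A : seq 'I_m) : uniq A -> (size A <= k)%N ->
  \sum_(seeds <- all_seqs seed_space k) ((qrun (searchQ k A seeds) x).2)%:R
    <= budget (size A) *+ (size seed_space ^ k).
Proof.
elim: k A => [|k IH] [|j A] uniqA sizeA //.
- by rewrite big_seq1 expn0 mulr1n budget_ge0.
- by rewrite big1 ?mulrn_wge0 ?budget_ge0.
have uniqA' : uniq A by case/andP: uniqA.
set vs := map x (col_cells n j); set hit := fun i => is_zero (x (i, j)).
set L := sample_len n (size A).+1.
set rest : R := if all val_of vs then (verify_cost n m)%:R
            else budget (size [seq b <- A | points_to vs b]).
have round s : \sum_(r <- all_seqs seed_space k) ((qrun (searchQ k.+1 (j :: A) (s :: r)) x).2)%:R
    <= (L%:R + (if has hit (take L s) then budget (size A) else n%:R + rest))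
       *+ (size seed_space ^ k).
  under eq_bigr do rewrite /= qrun_bind_cost natrD.
  rewrite big_split /= sumr_const_seq size_all_seqs mulrnDl lerD //.
    rewrite ler_wMn2r // ler_nat (leq_trans (ask_find_cost _ _ _)) //.
    by rewrite size_map size_take_min geq_minl.
  have -> : has hit (take L s) =
      isSome (qrun (ask_find (@is_zero n m) [seq (i, j) | i <- take L s]) x).1.
    by rewrite ask_find_none has_map.
  case: (qrun (ask_find _ _) x).1 => [c|] /=.
    exact: IH.
  under eq_bigr do rewrite qrun_bind_cost natrD ask_all_cost ask_all_out.
  rewrite big_split /= sumr_const_seq size_all_seqs size_map size_enum_ord mulrnDl lerD //.
  rewrite -/vs /rest; case: ifP => _.
    rewrite -(size_all_seqs _ k) -sumr_const_seq.
    by apply: ler_sum => r _; rewrite ler_nat verifyQ_cost.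
  apply: IH; first exact: filter_uniq.
  by rewrite size_filter (leq_trans (count_size _ _)).
rewrite big_allpairs_dep /=; apply: le_trans (ler_sum _ (fun s _ => round s)) _.
rewrite sumrMnl expnS [X in _ <= X]mulrnA; apply: ler_wMn2r; apply: round_budget.
- exact: (uniq_size_ord uniqA).
- rewrite /rest; case: ifP => _; first exact: verify_cost_le_budget.
  by apply: budget_mono; rewrite -count_zero_col size_points_to_le.
- rewrite /rest; case: ifP => _; first exact: verify_cost_le_budget.
  by apply: budget_mono; rewrite size_filter count_size.
Qed.

End ExpectedCost.

Lemma trunc_log_le_up_log p k : (1 < p)%N -> (trunc_log p k <= up_log p k)%N.
Proof.
move=> p_gt1; have [->|k_gt0] := posnP k; first by rewrite trunc_log0.
by rewrite -(leq_exp2l _ _ p_gt1) (leq_trans (trunc_logP p_gt1 k_gt0)) ?up_logP.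
Qed.

Section BudgetBound.
Variables (R : realFieldType) (n m : nat).
Local Notation U := (up_log 2 (n + m)).
Local Notation harmonic := (\sum_(1 <= k < m.+1) (k%:R : R)^-1).

Lemma sum_sample_len_le :
  \sum_(1 <= k < m.+1) ((sample_len n k)%:R : R) <= U%:R * (2 * n%:R * harmonic + m%:R).
Proof.
have sample_len_bound k : (1 <= k < m.+1)%N ->
    ((sample_len n k)%:R : R) <= U%:R * (2 * n%:R * k%:R^-1 + 1).
  rewrite ltnS => /andP[k_gt0 k_le]; rewrite natrM mulrC ler_pM ?ler0n //.
    by rewrite ler_nat leq_up_log // (leq_trans k_le) ?leq_addl.
  rewrite -natr1 lerD2r ler_pdivlMr ?ltr0n // -(natrM R 2 n) -natrM ler_nat.
  exact: leq_divM.
apply: le_trans (ler_sum_nat sample_len_bound) _.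
by rewrite -mulr_sumr big_split /= -mulr_sumr sumr_const_nat subSS subn0.
Qed.

Lemma budget_le : budget R n m m <= (10 * (n + m) * U.+1 ^ 2)%:R.
Proof.
rewrite /budget /round_cost big_split /= -mulr_sumr.
have up_le : (up_log 2 m <= U)%N by rewrite leq_up_log ?leq_addl.
have harm_le : harmonic <= U%:R + 1.
  by rewrite natr1; apply: le_trans (harmonic_le_up_log R m) _; rewrite ler_nat ltnS.
have trunc_le : ((trunc_log 2 m)%:R : R) <= U%:R.
  by rewrite ler_nat (leq_trans (trunc_log_le_up_log _ _)).
have harm_ge0 : 0 <= harmonic by rewrite sumr_ge0 // => k _; rewrite invr_ge0.
have := sum_sample_len_le; rewrite /verify_cost -[(trunc_log 2 m).+2]addn2.
rewrite !natrD !natrM !natrD -[U.+1%:R]natr1.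
move: harm_le trunc_le harm_ge0; set u := U%:R; set h := harmonic.
set t := (trunc_log 2 m)%:R; set L := \sum_(1 <= k < m.+1) _.
move=> harm_le trunc_le harm_ge0 sum_le; have u_ge0 : 0 <= u by [].
have [n_ge0 m_ge0] : 0 <= n%:R :> R /\ 0 <= m%:R :> R by [].
have : u * n%:R * h <= u * n%:R * (u + 1) by rewrite ler_wpM2l ?mulr_ge0.
have : n%:R * h <= n%:R * (u + 1) by rewrite ler_wpM2l.
have : m%:R * t <= m%:R * u by rewrite ler_wpM2l.
have : 0 <= u * n%:R /\ 0 <= u * m%:R /\ 0 <= u * u * n%:R /\ 0 <= u * u * m%:R.
  by rewrite !mulr_ge0.
nra.
Qed.

End BudgetBound.

Section UniformTree.
Variables (R : realType) (I A T : Type) (g : T -> dtree I A).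

Definition uniform_rdtree (l : seq T) : rdtree R I A := [seq ((size l)%:R^-1, g s) | s <- l].

Lemma zero_error_uniform l f : (0 < size l)%N -> (forall s, computes (g s) f) ->
  zero_error (uniform_rdtree l) f.
Proof.
move=> l_gt0 g_ok; split.
  split=> [p | ].
    suff /allP : all (fun q => 0 <= q) (map fst (uniform_rdtree l)) by apply.
    rewrite -map_comp all_map (eq_all (a2 := predT)) ?all_predT // => s /=.
    by rewrite invr_ge0 ler0n.
  by rewrite big_map sumr_const_seq -[_^-1 *+ _]mulr_natr mulVf // pnatr_eq0 -lt0n.
move=> i; rewrite size_map => i_lt; case: l l_gt0 i_lt => // s0 l _ i_lt.
by rewrite /= (nth_map s0) // => _; apply: g_ok.
Qed.

Lemma exp_queries_uniform l x :
  exp_queries (uniform_rdtree l) x = (size l)%:R^-1 * \sum_(s <- l) ((run (g s) x).2)%:R.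
Proof. by rewrite /exp_queries big_map mulr_sumr. Qed.

End UniformTree.

Theorem theorem4 (R : realType) :
  exists (C c : nat), forall n m : nat, (0 < n)%N -> (0 < m)%N ->
    exists D : rdtree R (cell n m) (Sigma n m),
      zero_error D (@f_nm n m) /\
      forall x : cell n m -> Sigma n m,
        exp_queries D x <= (C * (n + m) * (up_log 2 (n + m)).+1 ^ c)%:R.
Proof.
exists 10%N, 2%N => n m n_gt0 _.
pose seedings := all_seqs (seed_space n m) m.
have seedings_gt0 : (0 < size seedings)%N.
  by rewrite !size_all_seqs size_enum_ord !expn_gt0 n_gt0.
exists (uniform_rdtree R (fun seeds => qtree (searchQ m (enum 'I_m) seeds)) seedings).
split=> [|x].
  apply: zero_error_uniform => // seeds x; rewrite run_qtree searchQ_correct ?size_enum_ord //.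
  by move=> b; rewrite mem_enum.
rewrite exp_queries_uniform; under eq_bigr do rewrite run_qtree.
apply: le_trans (budget_le R n m); rewrite mulrC ler_pdivrMr ?ltr0n // mulr_natr.
have := searchQ_cost R x (enum_uniq 'I_m) (leqnn _).
by rewrite size_enum_ord -size_all_seqs.
Qed.
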